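(* There are absolute constants $c>0$ and $K$ such that the following holds. Let $G$ be a finite Abelian group, $\varepsilon>0$, $d\ge1$, $R$ a regular Bohr set of rank $r$, $C=R_\sigma$ a regular Bohr set with $\sigma\le c\varepsilon/(r2^d)$, and $\{A_g\}_{g\in C}$ subsets of $R$ with $\sum_{g\in C}|A_g|\ge2^{-d}|R||C|$. Let $\alpha_g=|A_g|/|G|$, $\alpha=\sum_{g\in C}\alpha_g^2$, $D(x)=|A_x|$ for $x\in C$ and $0$ otherwise, and $f=\sum_{g\in C}1_{A_g}\circ1_{A_g+g}$. Then either (1) $|\langle\mu_f,\mu_D\rangle-\mu(R)^{-1}|\le\varepsilon\mu(R)^{-1}$, or (2) there is an even integer $2\le p\le Kd$ with \[ \Big\|\tfrac1\alpha\sum_{g\in C}(1_{A_g}-\alpha_g\mu_R)\circ(1_{A_g+g}-\alpha_g\mu_{R+g})\Big\|_{p(\mu_C)}\ge\tfrac{\varepsilon}{2}\mu(R)^{-1}. \]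
   Context: Averages normalized over $G$: $\langle f,g\rangle=\mathbb{E}_xf(x)g(x)$, $(f\circ g)(x)=\mathbb{E}_yf(y)g(x+y)$; $\mu(X)=|X|/|G|$, $\mu_X=\frac{|G|}{|X|}1_X$, $\mu_f=f/\mathbb{E}[f]$; for $\nu\ge0$, $\|f\|_{p(\nu)}=(\mathbb{E}_x\nu(x)|f(x)|^p)^{1/p}$. Bohr set: for nonempty $\Gamma\subseteq\widehat G$, $\phi\in[0,2]$, $\mathrm{Bohr}(\Gamma,\phi)=\{x:|1-\gamma(x)|\le\phi\ \forall\gamma\in\Gamma\}$, rank $|\Gamma|$; dilate $B_\rho=\mathrm{Bohr}(\Gamma,\rho\phi)$. $B$ of rank $r$ is regular if for all $0\le\kappa\le1/(100r)$: $|B_{1+\kappa}|\le(1+100\kappa r)|B|$ and $|B_{1-\kappa}|\ge(1-100\kappa r)|B|$. *)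

From mathcomp Require Import all_boot all_order all_algebra.
From mathcomp Require Import reals complex.
From mathcomp Require Import all_analysis.
Import Order.TTheory GRing.Theory Num.Theory.

Set Implicit Arguments.
Unset Strict Implicit.
Unset Printing Implicit Defensive.

Local Open Scope ring_scope.

Section BohrDefs.
Variables (R : realType) (G : finZmodType).

Definition Eavg (F : G -> R) : R := (\sum_(x : G) F x) / #|G|%:R.
Definition binner (f g : G -> R) : R := Eavg (fun x => f x * g x).
Definition bconv (f g : G -> R) : G -> R := fun x => Eavg (fun y => f y * g (x + y)).
Definition dens (X : {set G}) : R := #|X|%:R / #|G|%:R.
Definition ind (X : {set G}) : G -> R := fun x => (x \in X)%:R.
Definition muS (X : {set G}) : G -> R := fun x => (#|G|%:R / #|X|%:R) * ind X x.
Definition muf (f : G -> R) : G -> R := fun x => f x / Eavg f.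
Definition Lpnorm (p : nat) (nu f : G -> R) : R :=
  (Eavg (fun x => nu x * `|f x| ^+ p)) `^ (p%:R^-1).
Definition translate (A : {set G}) (g : G) : {set G} := [set a + g | a in A].

Definition is_character (gam : {ffun G -> R[i]}) : Prop :=
  (forall x y, gam (x + y) = gam x * gam y) /\ (forall x, `|gam x| = 1).

(* Bohr(Gamma, phi) = {x : |1 - gam(x)| <= phi for all gam in Gamma} ;
   the dilate B_rho is bohr Gamma (rho * phi). *)
Definition bohr (Gam : seq {ffun G -> R[i]}) (phi : R) : {set G} :=
  [set x | all (fun gam : {ffun G -> R[i]} => `|1 - gam x| <= (phi%:C)%C) Gam].

Definition bohr_params (Gam : seq {ffun G -> R[i]}) (phi : R) : Prop :=
  [/\ Gam != [::], uniq Gam, (forall gam, gam \in Gam -> is_character gam)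
    & 0 <= phi <= 2].

Definition brank (Gam : seq {ffun G -> R[i]}) : nat := size Gam.

Definition regular (Gam : seq {ffun G -> R[i]}) (phi : R) : Prop :=
  let r := (brank Gam)%:R in
  forall kappa : R, 0 <= kappa -> kappa <= (100 * r)^-1 ->
    #|bohr Gam ((1 + kappa) * phi)|%:R <= (1 + 100 * kappa * r) * #|bohr Gam phi|%:R
    /\ #|bohr Gam ((1 - kappa) * phi)|%:R >= (1 - 100 * kappa * r) * #|bohr Gam phi|%:R.

End BohrDefs.

Arguments dens {R G} X.
Arguments ind {R G} X _.
Arguments muS {R G} X _.

From mathcomp Require Import all_boot all_order all_algebra.
From mathcomp Require Import reals complex.
From mathcomp Require Import all_analysis.
From mathcomp Require Import ring lra.
Import Order.TTheory GRing.Theory Num.Theory.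

Set Implicit Arguments.
Unset Strict Implicit.
Unset Printing Implicit Defensive.

Local Open Scope ring_scope.

(* Write u = mu(R)^-1, w = mu_D and F for the normalised sum of balanced
   convolutions in (2).  Expanding 1_{A_g} o 1_{A_g+g} around alpha_g mu_R and
   alpha_g mu_{R+g} gives f = alpha F + alpha u + sum_g E_g, and on C each
   |E_g| <= 400 sigma r alpha_g: shifting R by an element of C - C only moves
   its boundary R \ R_{1-2 sigma}, which regularity makes small.  Hence
   <mu_f, mu_D> = u + E_w[F] + O(sigma r 2^d u).  As w <= 2^d mu_C, Young's
   inequality bounds E_w|F| by (3/2) ||F||_{p(mu_C)} once 2^d <= (3/2)^p, so
   either that norm is at least eps u / 2 or the inner product is within
   eps u of u.  When eps >= 2^d no moment is needed: 0 <= <mu_f, mu_D> <= 2^d u. *)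

Section Characters.
Variables (R : realType) (G : finZmodType).
Implicit Types (gam : {ffun G -> R[i]}) (x y : G).

Lemma char0 gam : is_character gam -> gam 0 = 1.
Proof.
case=> gamD gam_norm; have := gamD 0 0; rewrite addr0 => gam00.
have gam0_neq0 : gam 0 != 0 by rewrite -normr_eq0 gam_norm oner_eq0.
by apply: (mulfI gam0_neq0); rewrite mulr1 -gam00.
Qed.

Lemma char_distN gam x : is_character gam -> `|1 - gam (- x)| = `|1 - gam x|.
Proof.
move=> gamC; have := char0 gamC; case: gamC => gamD gam_norm gam0.
have gamxN : gam x * gam (- x) = 1 by rewrite -gamD subrr.
have -> : 1 - gam (- x) = gam (- x) * (gam x - 1) by rewrite mulrBr mulrC gamxN mulr1.
by rewrite normrM gam_norm mul1r distrC.
Qed.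

Lemma char_distD gam x y : is_character gam ->
  `|1 - gam (x + y)| <= `|1 - gam x| + `|1 - gam y|.
Proof.
case=> gamD gam_norm; rewrite gamD.
have -> : 1 - gam x * gam y = (1 - gam x) + gam x * (1 - gam y).
  by rewrite mulrBr mulr1 addrA subrK.
by apply: le_trans (ler_normD _ _) _; rewrite normrM gam_norm mul1r.
Qed.

End Characters.

Section BohrSets.
Variables (R : realType) (G : finZmodType) (Gam : seq {ffun G -> R[i]}).
Hypothesis Gam_char : forall gam, gam \in Gam -> is_character gam.

Lemma bohrP a x :
  reflect (forall gam, gam \in Gam -> `|1 - gam x| <= (a%:C)%C) (x \in bohr Gam a).
Proof. by rewrite inE; apply: (iffP allP). Qed.

Lemma bohr_subset a b : a <= b -> bohr Gam a \subset bohr Gam b.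
Proof.
move=> le_ab; apply/subsetP => x /bohrP xa; apply/bohrP => gam gamG.
by apply: le_trans (xa _ gamG) _; rewrite lecR.
Qed.

Lemma mem_bohr0 a : 0 <= a -> 0 \in bohr Gam a.
Proof.
move=> a_ge0; apply/bohrP => gam gamG.
by rewrite (char0 (Gam_char gamG)) subrr normr0 ler0c.
Qed.

Lemma bohrD a b x y : x \in bohr Gam a -> y \in bohr Gam b -> x + y \in bohr Gam (a + b).
Proof.
move=> /bohrP xa /bohrP yb; apply/bohrP => gam gamG.
apply: le_trans (char_distD x y (Gam_char gamG)) _.
by rewrite rmorphD lerD ?xa ?yb.
Qed.

Lemma bohrN a x : x \in bohr Gam a -> - x \in bohr Gam a.
Proof.
move=> /bohrP xa; apply/bohrP => gam gamG.
by rewrite char_distN; [exact: xa | exact: Gam_char].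
Qed.

End BohrSets.

Section RealInequalities.
Variable R : realType.

Lemma ler_sqr_sum (I : finType) (P : {pred I}) (a : I -> R) :
  (\sum_(i in P) a i) ^+ 2 <= #|P|%:R * \sum_(i in P) a i ^+ 2.
Proof.
have [P0|P_gt0] := posnP #|P|.
  rewrite P0 mul0r big_pred0 ?expr0n // => i.
  by rewrite (card0_eq P0).
set S := \sum_(i in P) a i; set n : R := #|P|%:R.
have n_gt0 : 0 < n by rewrite ltr0n.
(* the variance of a about its mean t is nonnegative *)
set t := S / n.
have var_ge0 : 0 <= \sum_(i in P) (a i - t) ^+ 2 by apply: sumr_ge0 => i _; exact: sqr_ge0.
have varE : \sum_(i in P) (a i - t) ^+ 2 = \sum_(i in P) a i ^+ 2 - (2 * t) * S + n * t ^+ 2.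
  rewrite (eq_bigr (fun i => (a i ^+ 2 - (2 * t) * a i) + t ^+ 2)); last by move=> i _; ring.
  by rewrite big_split sumrB /= -mulr_sumr sumr_const -[t ^+ 2 *+ _]mulr_natl.
rewrite -subr_ge0.
have -> : n * (\sum_(i in P) a i ^+ 2) - S ^+ 2 = n * \sum_(i in P) (a i - t) ^+ 2.
  by rewrite varE /t; field; exact: lt0r_neq0.
by rewrite mulr_ge0 // ltW.
Qed.

Lemma natmul_le_exprS (t : R) n : 0 <= t -> n.+1%:R * t <= t ^+ n.+1 + n%:R.
Proof.
move=> t_ge0; elim: n => [|n IH]; first by rewrite mul1r expr1 addr0.
have IHt : t * (n.+1%:R * t) <= t * (t ^+ n.+1 + n%:R) by rewrite ler_wpM2l.
rewrite -!natr1 in IHt *; rewrite exprS.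
have n_ge0 : 0 <= (n%:R : R) by rewrite ler0n.
have sq_ge0 : 0 <= (n%:R + 1) * (t - 1) ^+ 2 by apply: mulr_ge0; [lra | exact: sqr_ge0].
nra.
Qed.

(* Young's inequality z lam^(p-1) <= z^p / p + (1 - 1/p) lam^p, cleared of denominators *)
Lemma young_exprn (z lam : R) p : 0 <= z -> 0 < lam -> (0 < p)%N ->
  p%:R * lam ^+ p.-1 * z <= z ^+ p + p.-1%:R * lam ^+ p.
Proof.
move=> z_ge0 lam_gt0; case: p => // n _ /=.
have lamn_gt0 : 0 < lam ^+ n.+1 by rewrite exprn_gt0.
have := ler_wpM2r (ltW lamn_gt0) (natmul_le_exprS n (divr_ge0 z_ge0 (ltW lam_gt0))).
rewrite mulrDl exprMn exprVn mulfVK ?(lt0r_neq0 lamn_gt0) //.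
by congr (_ <= _); rewrite exprS; field; exact: lt0r_neq0.
Qed.

Lemma ler_exprn_powRV (S th : R) p : (0 < p)%N -> 0 <= S -> 0 <= th ->
  S `^ p%:R^-1 < th -> S <= th ^+ p.
Proof.
move=> p_gt0 S_ge0 th_ge0 root_lt; rewrite leNgt; apply/negP => lt_thS.
have p1_gt0 : 0 < (p%:R : R)^-1 by rewrite invr_gt0 ltr0n.
have thp_nneg : th ^+ p \in Num.nneg by rewrite nnegrE exprn_ge0.
have S_nneg : S \in Num.nneg by rewrite nnegrE.
have := gt0_ltr_powR p1_gt0 thp_nneg S_nneg lt_thS.
rewrite -powR_mulrn // -powRrM mulfV ?powRr1 ?pnatr_eq0 -?lt0n // => lt_S.
by have := lt_trans root_lt lt_S; rewrite ltxx.
Qed.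

(* Read a = |A_g|, nR = |R|, N = |G|, and k1, k2, k3 as the shift counts of
   the three cross terms of 1_{A_g} o 1_{A_g+g}: known up to del nR, they
   nearly cancel against the main term alpha_g^2 u. *)
Lemma cross_terms_le (a nR N k1 k2 k3 del : R) :
  0 <= a -> a <= nR -> 0 < nR -> 0 < N -> 0 <= del ->
  a - del * nR <= k1 <= a -> a - del * nR <= k2 <= a -> nR - del * nR <= k3 <= nR ->
  `|a / N * (k1 / nR) + a / N * (k2 / nR) - (a / N) ^+ 2 * (N * k3 / nR ^+ 2)
      - (a / N) ^+ 2 * (N / nR)| <= 2 * del * (a / N).
Proof.
move=> a_ge0 a_le nR_gt0 N_gt0 del_ge0 /andP[k1_ge k1_le] /andP[k2_ge k2_le]
  /andP[k3_ge k3_le].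
have [N_neq0 nR_neq0] := (lt0r_neq0 N_gt0, lt0r_neq0 nR_gt0).
set q := k3 / nR.
have q_ge : 1 - del <= q by rewrite ler_pdivlMr //; nra.
have q_le : q <= 1 by rewrite ler_pdivrMr //; nra.
have -> : a / N * (k1 / nR) + a / N * (k2 / nR) - (a / N) ^+ 2 * (N * k3 / nR ^+ 2)
      - (a / N) ^+ 2 * (N / nR) = a / (N * nR) * (k1 + k2 - a * q - a).
  by rewrite /q; field; rewrite N_neq0 nR_neq0.
have -> : 2 * del * (a / N) = a / (N * nR) * (2 * del * nR) by field; rewrite N_neq0 nR_neq0.
have c_ge0 : 0 <= a / (N * nR) by rewrite divr_ge0 // mulr_ge0 // ltW.
rewrite normrM ger0_norm // ler_wpM2l //.
by rewrite ler_norml; apply/andP; split; nra.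
Qed.

End RealInequalities.

Definition moment (R : realType) (d : R) : nat := (4 * (Num.truncn d).+1)%N.

Section Moment.
Variables (R : realType) (d : R).
Hypothesis d_ge1 : 1 <= d.

Lemma moment_even : ~~ odd (moment d).
Proof. by rewrite /moment oddM. Qed.

Lemma moment_ge2 : (2 <= moment d)%N.
Proof. by rewrite /moment mulnS. Qed.

Lemma moment_le : (moment d)%:R <= 8 * d.
Proof.
have trunc_le : ((Num.truncn d)%:R : R) <= d by rewrite truncn_le; move: d_ge1; lra.
by rewrite /moment natrM -natr1; move: d_ge1; lra.
Qed.

Lemma powR2_le_moment : 2 `^ d <= (3 / 2) ^+ moment d.
Proof.
have d_le : d <= (Num.truncn d).+1%:R by apply/ltW/truncnS_gt.
apply: le_trans (_ : 2 `^ ((Num.truncn d).+1%:R) <= _); first by rewrite ler_powR //; lra.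
rewrite powR_mulrn /moment ?exprM; last lra.
by apply: lerXn2r; rewrite ?nnegrE ?exprn_ge0 //; lra.
Qed.

End Moment.

Section Averages.
Context {R : realType} {G : finZmodType}.
Implicit Types (F H : G -> R) (S T : {set G}).
Local Notation N := (#|G|%:R : R).

Lemma cardG_gt0 : 0 < N.
Proof. by rewrite ltr0n; apply/card_gt0P; exists 0. Qed.

Lemma eq_Eavg F H : F =1 H -> Eavg F = Eavg H.
Proof. by move=> eqFH; rewrite /Eavg (eq_bigr _ (fun x _ => eqFH x)). Qed.

Lemma EavgD F H : Eavg (fun x => F x + H x) = Eavg F + Eavg H.
Proof. by rewrite /Eavg big_split /= mulrDl. Qed.

Lemma EavgB F H : Eavg (fun x => F x - H x) = Eavg F - Eavg H.
Proof. by rewrite /Eavg sumrB mulrBl. Qed.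

Lemma EavgZ k F : Eavg (fun x => k * F x) = k * Eavg F.
Proof. by rewrite /Eavg -mulr_sumr mulrA. Qed.

Lemma Eavg_sum (I : finType) (P : pred I) (F : I -> G -> R) :
  Eavg (fun x => \sum_(i | P i) F i x) = \sum_(i | P i) Eavg (F i).
Proof. by rewrite /Eavg exchange_big /= mulr_suml. Qed.

Lemma ler_Eavg F H : (forall x, F x <= H x) -> Eavg F <= Eavg H.
Proof. by move=> leFH; rewrite /Eavg ler_pM2r ?invr_gt0 ?cardG_gt0 ?ler_sum. Qed.

Lemma Eavg_ge0 F : (forall x, 0 <= F x) -> 0 <= Eavg F.
Proof. by move=> F_ge0; rewrite /Eavg mulr_ge0 ?invr_ge0 ?ler0n ?sumr_ge0. Qed.

Lemma ler_norm_Eavg F : `|Eavg F| <= Eavg (fun x => `|F x|).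
Proof.
rewrite /Eavg normrM [`|_^-1|]ger0_norm ?invr_ge0 ?ler0n //.
by rewrite ler_pM2r ?invr_gt0 ?cardG_gt0 // ler_norm_sum.
Qed.

Lemma sum_addr F s : \sum_x F (x + s) = \sum_x F x.
Proof. by rewrite [RHS](reindex_inj (addIr s)). Qed.

Lemma Eavg_bconv F H : Eavg (bconv F H) = Eavg F * Eavg H.
Proof.
rewrite /bconv /Eavg -mulr_suml exchange_big /=.
under eq_bigr => y _ do rewrite -mulr_sumr (sum_addr H y).
by rewrite -mulr_suml; field; exact/lt0r_neq0/cardG_gt0.
Qed.

Lemma bconv_ge0 F H x : (forall y, 0 <= F y) -> (forall y, 0 <= H y) -> 0 <= bconv F H x.
Proof. by move=> F_ge0 H_ge0; apply: Eavg_ge0 => y; rewrite mulr_ge0. Qed.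

Lemma bconv_le_Eavg F H x : (forall y, 0 <= F y) -> (forall y, H y <= 1) ->
  bconv F H x <= Eavg F.
Proof. by move=> F_ge0 H_le1; apply: ler_Eavg => y; rewrite ler_piMr. Qed.

Lemma bconv_split F H F' H' k x :
  bconv F H x = bconv (fun y => F y - k * F' y) (fun y => H y - k * H' y) x
    + k * bconv F' H x + k * bconv F H' x - k ^+ 2 * bconv F' H' x.
Proof.
by rewrite /bconv -!EavgZ -!EavgD -EavgB; apply: eq_Eavg => y; ring.
Qed.

Lemma ind_ge0 S y : 0 <= ind S y :> R.
Proof. by rewrite /ind ler0n. Qed.

Lemma ind_le1 S y : ind S y <= 1 :> R.
Proof. by rewrite /ind lern1 leq_b1. Qed.

Lemma sum_ind S : \sum_x ind S x = #|S|%:R :> R.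
Proof.
rewrite /ind (eq_bigr (fun x => if x \in S then 1 else 0)); last by move=> x _; case: (x \in S).
by rewrite -big_mkcond sumr_const.
Qed.

Lemma Eavg_ind S : Eavg (ind S) = dens S :> R.
Proof. by rewrite /Eavg sum_ind. Qed.

Lemma mem_translate S g y : (y \in translate S g) = (y - g \in S).
Proof.
apply/imsetP/idP => [[a aS ->]|ygS]; first by rewrite addrK.
by exists (y - g); rewrite ?subrK.
Qed.

Lemma card_translate S g : #|translate S g| = #|S|.
Proof. exact/card_imset/addIr. Qed.

Lemma ind_translate S g y : ind (translate S g) y = ind S (y - g) :> R.
Proof. by rewrite /ind mem_translate. Qed.

Definition shift_count S T s : R := \sum_y ind S y * ind T (y + s).

Lemma shift_countC S T s : shift_count S T s = shift_count T S (- s).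
Proof.
rewrite /shift_count -(sum_addr (fun y => ind S y * ind T (y + s)) (- s)).
by apply: eq_bigr => y _; rewrite subrK mulrC.
Qed.

Lemma shift_count_le T S s : shift_count T S s <= #|T|%:R.
Proof. by rewrite -sum_ind ler_sum // => y _; rewrite ler_piMr ?ind_ge0 ?ind_le1. Qed.

Lemma shift_count_ge T S S' s :
  T \subset S -> S' \subset S -> (forall y, y \in S' -> y + s \in S) ->
  #|T|%:R - (#|S|%:R - #|S'|%:R) <= shift_count T S s.
Proof.
move=> /subsetP sTS /subsetP sS'S S'_shift.
rewrite -!sum_ind lerBlDr -sumrB -big_split /=; apply: ler_sum => y _.
rewrite /ind; move: (sTS y) (sS'S y) (S'_shift y).
by case: (y \in T); case: (y \in S); case: (y \in S'); case: (y + s \in S) => //= *;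
  rewrite ?(mul0r, mul1r, subrr, subr0); lra.
Qed.

Lemma bconv_muS_ind S T g x :
  bconv (muS S) (ind (translate T g)) x = shift_count T S (g - x) / #|S|%:R.
Proof.
rewrite /bconv /muS /Eavg -opprB -shift_countC /shift_count.
rewrite (eq_bigr (fun y => N / #|S|%:R * (ind S y * ind T (y + (x - g))))); last first.
  by move=> y _; rewrite ind_translate [x + y]addrC -addrA; ring.
rewrite -mulr_sumr; move: #|S|%:R^-1 => k.
by field; exact/lt0r_neq0/cardG_gt0.
Qed.

Lemma bconv_ind_muS S T g x :
  bconv (ind T) (muS (translate S g)) x = shift_count T S (x - g) / #|S|%:R.
Proof.
rewrite /bconv /muS /Eavg /shift_count card_translate.
rewrite (eq_bigr (fun y => N / #|S|%:R * (ind T y * ind S (y + (x - g))))); last first.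
  by move=> y _; rewrite ind_translate [x + y]addrC -addrA; ring.
rewrite -mulr_sumr; move: #|S|%:R^-1 => k.
by field; exact/lt0r_neq0/cardG_gt0.
Qed.

Lemma bconv_muS_muS S g x :
  bconv (muS S) (muS (translate S g)) x = N * shift_count S S (x - g) / #|S|%:R ^+ 2.
Proof.
rewrite /bconv /muS /Eavg /shift_count card_translate.
rewrite (eq_bigr (fun y => (N / #|S|%:R) ^+ 2 * (ind S y * ind S (y + (x - g))))); last first.
  by move=> y _; rewrite ind_translate [x + y]addrC -addrA; ring.
rewrite -mulr_sumr -exprVn; move: #|S|%:R^-1 => k.
by field; exact/lt0r_neq0/cardG_gt0.
Qed.

(* Young's inequality averaged against w. *)
Lemma Eavg_weighted_norm_le (w nu H : G -> R) (M lam : R) p :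
  (0 < p)%N -> 0 < lam -> (forall x, 0 <= w x) -> Eavg w = 1 ->
  (forall x, w x <= M * nu x) ->
  M * Eavg (fun x => nu x * `|H x| ^+ p) <= lam ^+ p ->
  Eavg (fun x => w x * `|H x|) <= lam.
Proof.
move=> p_gt0 lam_gt0 w_ge0 Ew1 w_le moment_le.
have c_gt0 : 0 < p%:R * lam ^+ p.-1 by rewrite mulr_gt0 ?ltr0n ?exprn_gt0.
rewrite -(ler_pM2l c_gt0) -EavgZ.
apply: le_trans (_ : Eavg (fun x => M * (nu x * `|H x| ^+ p) + p.-1%:R * lam ^+ p * w x)
  <= _).
  apply: ler_Eavg => x.
  have := ler_wpM2l (w_ge0 x) (young_exprn (normr_ge0 (H x)) lam_gt0 p_gt0).
  have : w x * `|H x| ^+ p <= M * (nu x * `|H x| ^+ p).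
    by rewrite mulrA ler_wpM2r ?exprn_ge0.
  lra.
rewrite EavgD !EavgZ Ew1 mulr1.
have lamE : lam ^+ p = lam * lam ^+ p.-1 by rewrite -exprS prednK.
rewrite lamE in moment_le *.
have -> : (p%:R : R) = p.-1%:R + 1 by rewrite natr1 prednK.
lra.
Qed.

End Averages.

Section Lemma4p4.
Variables (R : realType) (G : finZmodType).
Variables (eps d sigma phi : R) (Gam : seq {ffun G -> R[i]}) (A : G -> {set G}).
Hypotheses (eps_gt0 : 0 < eps) (d_ge1 : 1 <= d) (sigma_gt0 : 0 < sigma) (phi_ge0 : 0 <= phi).
Hypotheses (Gam_neq0 : Gam != [::]) (Gam_char : forall gam, gam \in Gam -> is_character gam).
Hypothesis regR : regular Gam phi.
Hypothesis sigma_small : sigma <= 1600^-1 * eps / ((brank Gam)%:R * 2 `^ d).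

Let RB := bohr Gam phi.
Let C := bohr Gam (sigma * phi).
Hypothesis A_sub : forall g, g \in C -> A g \subset RB.
Hypothesis A_dense : 2 `^ (- d) * #|RB|%:R * #|C|%:R <= \sum_(g in C) (#|A g|%:R : R).

Let alphag g : R := dens (A g).
Let alpha : R := \sum_(g in C) alphag g ^+ 2.
Let D x : R := if x \in C then #|A x|%:R else 0.
Let f x : R := \sum_(g in C) bconv (ind (A g)) (ind (translate (A g) g)) x.
Let F x : R := alpha^-1 * \sum_(g in C)
  bconv (fun y => ind (A g) y - alphag g * muS RB y)
        (fun y => ind (translate (A g) g) y - alphag g * muS (translate RB g) y) x.

Let N : R := #|G|%:R.
Let nR : R := #|RB|%:R.
Let nC : R := #|C|%:R.
Let r : R := (brank Gam)%:R.
Let M : R := 2 `^ d.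
Let u : R := N / nR.
Let S1 : R := \sum_(g in C) alphag g.
Let w x : R := D x / S1.
Let X : R := Eavg (fun x => f x / alpha * w x).

Let N_gt0 : 0 < N. Proof. exact: cardG_gt0. Qed.

Let sigma_phi_ge0 : 0 <= sigma * phi. Proof. exact: mulr_ge0 (ltW sigma_gt0) phi_ge0. Qed.

Let nR_gt0 : 0 < nR.
Proof. by rewrite ltr0n; apply/card_gt0P; exists 0; exact: mem_bohr0. Qed.

Let nC_gt0 : 0 < nC.
Proof. by rewrite ltr0n; apply/card_gt0P; exists 0; exact: mem_bohr0. Qed.

Let u_gt0 : 0 < u. Proof. exact: divr_gt0. Qed.

Let M_ge2 : 2 <= M.
Proof. by rewrite /M -[X in X <= _](powRr1 (_ : 0 <= 2)) // ler_powR // ler1n. Qed.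

Let M_gt0 : 0 < M. Proof. by apply: lt_le_trans M_ge2. Qed.

Let cardA_le g : g \in C -> #|A g|%:R <= nR.
Proof. by move=> gC; rewrite ler_nat subset_leq_card ?A_sub. Qed.

Let S1_ge : M^-1 * nR * nC / N <= S1.
Proof. by rewrite /S1 -mulr_suml ler_pM2r ?invr_gt0 // -powRN. Qed.

Let S1_gt0 : 0 < S1.
Proof. by apply: lt_le_trans S1_ge; rewrite !(mulr_gt0, divr_gt0) // invr_gt0. Qed.

Let alpha_gt0 : 0 < alpha.
Proof.
have : 0 < nC * alpha by apply: lt_le_trans (ler_sqr_sum _ _); rewrite exprn_gt0.
by rewrite pmulr_rgt0.
Qed.

(* Cauchy-Schwarz: S1^2 <= |C| alpha, combined with the density hypothesis *)
Let S1_div_alpha_le : S1 / alpha <= M * u.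
Proof.
have dense : nC * nR <= M * N * S1.
  have := S1_ge; rewrite ler_pdivrMr // => /(ler_wpM2l (ltW M_gt0)).
  by rewrite !mulrA mulfV ?gt_eqF // mul1r; lra.
have CS : S1 ^+ 2 * nR <= nC * alpha * nR.
  by rewrite ler_pM2r //; exact: ler_sqr_sum.
rewrite ler_pdivrMr // /u mulrA mulrAC ler_pdivlMr // -(ler_pM2l S1_gt0).
have := ler_wpM2r (ltW alpha_gt0) dense.
move: CS; rewrite expr2; lra.
Qed.

Let Eavg_f : Eavg f = alpha.
Proof.
rewrite /f Eavg_sum; apply: eq_bigr => g _.
by rewrite Eavg_bconv !Eavg_ind /dens card_translate expr2.
Qed.

Let Eavg_D : Eavg D = S1.
Proof. by rewrite /S1 /alphag /dens -mulr_suml /Eavg /D (big_mkcond (mem C)). Qed.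

Let w_ge0 x : 0 <= w x.
Proof. by rewrite /w /D divr_ge0 ?(ltW S1_gt0) //; case: ifP. Qed.

Let Eavg_w : Eavg w = 1.
Proof.
by rewrite (eq_Eavg (H := fun x => S1^-1 * D x)) ?EavgZ ?Eavg_D ?mulVf ?gt_eqF // => x;
  rewrite mulrC.
Qed.

Let w_notin x : x \notin C -> w x = 0.
Proof. by move=> xC; rewrite /w /D (negbTE xC) mul0r. Qed.

(* |A_x| <= |R| while S1 >= 2^-d |R| |C| / |G| *)
Let w_le_muS x : w x <= M * muS C x.
Proof.
rewrite /w /D /muS /ind; case: ifP => xC; last by rewrite !(mul0r, mulr0).
rewrite mulr1 ler_pdivrMr //; apply: le_trans (cardA_le xC) _.
have -> : nR = M * (N / nC) * (M^-1 * nR * nC / N) by field; rewrite !gt_eqF //; lra.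
by rewrite ler_wpM2l ?S1_ge // mulr_ge0 ?divr_ge0 ?ltW //; lra.
Qed.

Let inner_sub_u :
  X - u = Eavg (fun x => F x * w x) + Eavg (fun x => (f x / alpha - F x - u) * w x).
Proof.
rewrite -[u in LHS]mulr1 -Eavg_w -EavgZ /X -EavgB -EavgD.
by apply: eq_Eavg => x; ring.
Qed.

Let inner_mufE : binner (muf f) (muf D) = X.
Proof. by rewrite /binner /muf Eavg_f Eavg_D. Qed.

Let dens_RB_inv : (dens RB)^-1 = u.
Proof. by rewrite /dens invf_div. Qed.

Let f_ge0 x : 0 <= f x.
Proof. by apply: sumr_ge0 => g _; apply: bconv_ge0 => y; exact: ind_ge0. Qed.

Let f_le_S1 x : f x <= S1.
Proof.
apply: ler_sum => g _; rewrite /alphag -Eavg_ind.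
by apply: bconv_le_Eavg => y; [exact: ind_ge0 | exact: ind_le1].
Qed.

Let inner_close_of_large_eps : M <= eps -> `|X - u| <= eps * u.
Proof.
move=> M_le_eps.
have X_ge0 : 0 <= X.
  by apply: Eavg_ge0 => x; exact: mulr_ge0 (divr_ge0 (f_ge0 x) (ltW alpha_gt0)) (w_ge0 x).
have X_le : X <= M * u.
  apply: le_trans S1_div_alpha_le.
  rewrite -[S1 / alpha]mulr1 -Eavg_w -EavgZ; apply: ler_Eavg => x.
  by rewrite ler_wpM2r // ler_pM2r ?invr_gt0 ?f_le_S1.
have := ler_wpM2r (ltW u_gt0) M_le_eps; have := ler_wpM2r (ltW u_gt0) M_ge2.
by rewrite ler_norml; move: u_gt0; lra.
Qed.

Section SmallEps.
Hypothesis eps_lt_M : eps < M.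

Let del : R := 100 * (2 * sigma) * r.

Let r_ge1 : 1 <= r.
Proof. by rewrite /r /brank ler1n lt0n size_eq0. Qed.

Let r_gt0 : 0 < r. Proof. exact: lt_le_trans ltr01 r_ge1. Qed.

Let del_ge0 : 0 <= del.
Proof. by rewrite /del !mulr_ge0 ?(ltW sigma_gt0) ?(ltW r_gt0). Qed.

Let sigma_rM_le : sigma * r * M * 1600 <= eps.
Proof.
have rM_gt0 : 0 < r * M by rewrite mulr_gt0.
have : sigma * (r * M) <= 1600^-1 * eps by rewrite -ler_pdivlMr.
lra.
Qed.

Let del_small : del * M * 8 <= eps.
Proof. by rewrite /del; move: sigma_rM_le; lra. Qed.

Let two_sigma_le : 2 * sigma <= (100 * r)^-1.
Proof.
have sigma_r_le : sigma * r * 1600 <= 1.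
  by rewrite -(ler_pM2r M_gt0) mul1r; move: sigma_rM_le eps_lt_M; lra.
rewrite -(ler_pM2r (_ : 0 < 100 * r)) ?mulVf ?gt_eqF ?mulr_gt0 //.
by move: sigma_r_le; lra.
Qed.

Let C2 := bohr Gam (sigma * phi + sigma * phi).
Let R' := bohr Gam ((1 - 2 * sigma) * phi).

Let card_R'_ge : (1 - del) * nR <= #|R'|%:R.
Proof. by have [_] := regR (ltW (mulr_gt0 (ltr0n _ 2) sigma_gt0)) two_sigma_le. Qed.

Let R'_shift s : s \in C2 -> forall y, y \in R' -> y + s \in RB.
Proof.
move=> sC2 y yR'; have := bohrD Gam_char yR' sC2.
by rewrite (_ : _ + _ = phi) //; ring.
Qed.

Let shift_count_RB (T : {set G}) s : T \subset RB -> s \in C2 ->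
  #|T|%:R - del * nR <= (shift_count T RB s : R) <= #|T|%:R.
Proof.
move=> sTR sC2; apply/andP; split; last exact: shift_count_le.
have sR'R : R' \subset RB by apply: bohr_subset; rewrite ler_piMl //; move: sigma_gt0; lra.
apply: le_trans _ (shift_count_ge sTR sR'R (R'_shift sC2)).
by rewrite lerD2l lerN2; move: card_R'_ge; rewrite /nR; lra.
Qed.

Let sub_mem_C2 x g : x \in C -> g \in C -> x - g \in C2.
Proof. by move=> xC gC; apply: bohrD (bohrN Gam_char gC). Qed.

Let cross_err x g : R := alphag g * bconv (muS RB) (ind (translate (A g) g)) x
   + alphag g * bconv (ind (A g)) (muS (translate RB g)) x
   - alphag g ^+ 2 * bconv (muS RB) (muS (translate RB g)) x - alphag g ^+ 2 * u.

Let cross_err_small x g : x \in C -> g \in C -> `|cross_err x g| <= 2 * del * alphag g.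
Proof.
move=> xC gC; rewrite /cross_err bconv_muS_ind bconv_ind_muS bconv_muS_muS /alphag /dens /u.
exact: cross_terms_le (ler0n _ _) (cardA_le gC) nR_gt0 N_gt0 del_ge0
  (shift_count_RB (A_sub gC) (sub_mem_C2 gC xC)) (shift_count_RB (A_sub gC) (sub_mem_C2 xC gC))
  (shift_count_RB (subxx RB) (sub_mem_C2 xC gC)).
Qed.

Let f_decomp x : f x = alpha * F x + \sum_(g in C) cross_err x g + alpha * u.
Proof.
rewrite /F mulVKf ?gt_eqF // /alpha mulr_suml -!big_split /f /=.
apply: eq_bigr => g _.
by rewrite (bconv_split _ _ (muS RB) (muS (translate RB g)) (alphag g)) /cross_err; ring.
Qed.

Let f_near_F x : x \in C -> `|f x / alpha - F x - u| <= 2 * del * (M * u).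
Proof.
move=> xC; have -> : f x / alpha - F x - u = (\sum_(g in C) cross_err x g) / alpha.
  by rewrite f_decomp; field; rewrite gt_eqF.
have sum_le : `|\sum_(g in C) cross_err x g| <= 2 * del * S1.
  rewrite /S1 mulr_sumr; apply: le_trans (ler_norm_sum _ _ _) _.
  by apply: ler_sum => g gC; exact: cross_err_small.
rewrite normrM [`|alpha^-1|]gtr0_norm ?invr_gt0 //.
apply: le_trans (_ : 2 * del * S1 / alpha <= _); first by rewrite ler_pM2r ?invr_gt0.
rewrite -mulrA; apply: ler_wpM2l => //.
by rewrite mulr_ge0 ?ler0n.
Qed.

Let Eavg_near_F :
  `|Eavg (fun x => (f x / alpha - F x - u) * w x)| <= 2 * del * (M * u).
Proof.
apply: le_trans (ler_norm_Eavg _) _.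
apply: le_trans (_ : Eavg (fun x => 2 * del * (M * u) * w x) <= _); last first.
  by rewrite EavgZ Eavg_w mulr1.
apply: ler_Eavg => x; rewrite normrM (ger0_norm (w_ge0 x)).
have [xC|xC] := boolP (x \in C); last by rewrite w_notin // !mulr0.
exact: (ler_wpM2r (w_ge0 x) (f_near_F xC)).
Qed.

Lemma inner_close_of_small_norm :
  Lpnorm (moment d) (muS C) F < eps / 2 * u -> `|X - u| <= eps * u.
Proof.
set p := moment d; set th := eps / 2 * u => norm_lt.
have p_gt0 : (0 < p)%N by rewrite (leq_trans _ (moment_ge2 d)).
have th_gt0 : 0 < th by rewrite mulr_gt0 ?divr_gt0.
have muS_ge0 y : 0 <= muS C y by rewrite /muS mulr_ge0 ?divr_ge0 ?ind_ge0.
have moment_le : Eavg (fun x => muS C x * `|F x| ^+ p) <= th ^+ p.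
  apply: ler_exprn_powRV p_gt0 _ (ltW th_gt0) norm_lt; apply: Eavg_ge0 => x.
  by rewrite mulr_ge0 ?muS_ge0 ?exprn_ge0.
have wF_le : Eavg (fun x => w x * `|F x|) <= 3 / 2 * th.
  apply: Eavg_weighted_norm_le p_gt0 _ w_ge0 Eavg_w w_le_muS _; first by lra.
  rewrite exprMn; apply: le_trans (ler_wpM2l (ltW M_gt0) moment_le) _.
  by rewrite ler_wpM2r ?exprn_ge0 ?(ltW th_gt0) ?powR2_le_moment.
have F_term : `|Eavg (fun x => F x * w x)| <= 3 / 2 * th.
  apply: le_trans (ler_norm_Eavg _) (le_trans _ wF_le); apply: ler_Eavg => x.
  by rewrite normrM (ger0_norm (w_ge0 x)) mulrC.
rewrite inner_sub_u; apply: le_trans (ler_normD _ _) _.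
have := Eavg_near_F; have := ler_wpM2r (ltW u_gt0) del_small.
by move: F_term; rewrite /th; lra.
Qed.

End SmallEps.

Lemma lemma4p4_dichotomy :
  `|binner (muf f) (muf D) - (dens RB)^-1| <= eps * (dens RB)^-1 \/
  exists p : nat, [/\ ~~ odd p, (2 <= p)%N, p%:R <= 8 * d &
    eps / 2 * (dens RB)^-1 <= Lpnorm p (muS C) F].
Proof.
rewrite inner_mufE dens_RB_inv.
have [M_le_eps|eps_lt_M] := leP M eps; first by left; exact: inner_close_of_large_eps.
have [norm_ge|norm_lt] := leP (eps / 2 * u) (Lpnorm (moment d) (muS C) F).
  by right; exists (moment d); rewrite moment_even moment_ge2 moment_le.
by left; exact: inner_close_of_small_norm.
Qed.

End Lemma4p4.

Theorem lemma4p4 (R : realType) :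
  exists c K : R, 0 < c /\
  forall (G : finZmodType) (eps d sigma phi : R)
         (Gam : seq {ffun G -> R[i]}) (A : G -> {set G}),
    0 < eps -> 1 <= d ->
    bohr_params Gam phi -> regular Gam phi ->
    0 < sigma -> bohr_params Gam (sigma * phi) -> regular Gam (sigma * phi) ->
    sigma <= c * eps / ((brank Gam)%:R * 2 `^ d) ->
    let RB := bohr Gam phi in
    let C := bohr Gam (sigma * phi) in
    (forall g, g \in C -> A g \subset RB) ->
    \sum_(g in C) (#|A g|%:R : R) >= 2 `^ (- d) * #|RB|%:R * #|C|%:R ->
    let alphag : G -> R := fun g => dens (A g) in
    let alpha : R := \sum_(g in C) alphag g ^+ 2 in
    let D : G -> R := fun x => if x \in C then (#|A x|%:R : R) else 0 in
    let f : G -> R := fun x => \sum_(g in C) bconv (@ind R G (A g)) (@ind R G (translate (A g) g)) x in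
    `|binner (muf f) (muf D) - (dens RB)^-1| <= eps * (dens RB)^-1
    \/
    exists p : nat, [/\ ~~ odd p, (2 <= p)%N, p%:R <= K * d &
      Lpnorm p (muS C)
        (fun x : G => alpha^-1 * \sum_(g in C)
           bconv (fun y => ind (A g) y - alphag g * muS RB y)
                (fun y => ind (translate (A g) g) y - alphag g * muS (translate RB g) y) x)
      >= eps / 2 * (dens RB)^-1].
Proof.
exists 1600^-1, 8; split; first lra.
move=> G eps d sigma phi Gam A eps_gt0 d_ge1 [Gam_neq0 _ Gam_char /andP[phi_ge0 _]] regR
  sigma_gt0 _ _ sigma_small RB C A_sub A_dense alphag alpha D f.
exact: lemma4p4_dichotomy.
Qed.
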